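(* Let $k$ be a field and $d$ a positive integer such that the characteristic of $k$ does not divide $d$ (i.e. $d\cdot 1_k\neq 0$). Then $R_1^{(d)}$ is a (two-sided) ideal of $k_0\langle X\rangle$; in particular $R_1^{(d)}=R_2^{(d)}$.
   Context: Let $X=\{x_1,x_2,\ldots\}$ be a countably infinite set and let $k_0\langle X\rangle$ denote the free associative $k$-algebra (without identity) on $X$. A $T$-space of $k_0\langle X\rangle$ is a $k$-linear subspace closed under every algebra endomorphism of $k_0\langle X\rangle$; the $T$-space generated by a subset is the smallest $T$-space containing it. For $v_1,\ldots,v_d\in k_0\langle X\rangle$, let $S_d(v_1,\ldots,v_d)=\sum_{\sigma\in\Sigma_d}\prod_{i=1}^d v_{\sigma(i)}$, where $\Sigma_d$ is the symmetric group on $d$ letters; write $S_d(x)=S_d(x_1,\ldots,x_d)$. Let $R_1^{(d)}$ be the $T$-space generated by $S_d(x)$, and let $R_2^{(d)}$ be the $T$-space generated by $R_1^{(d)}$ together with all products $u\,S_d(v_1,\ldots,v_d)$ with $u\in R_1^{(d)}$, $v_i\in k_0\langle X\rangle$. *)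

From mathcomp Require Import all_boot all_order all_algebra all_fingroup.
Set Implicit Arguments. Unset Strict Implicit. Unset Printing Implicit Defensive.
Import GRing.Theory.
Local Open Scope ring_scope.

(* Words over the alphabet X = {x_0, x_1, ...} (x_i is indexed by i : nat;
   x_{i+1} of the paper is x_i here). *)
Definition word := seq nat.

Section FreeAlg.
Variable k : fieldType.

(* Ambient space: all k-valued functions on words (formal noncommutative power
   series).  The free algebra without identity k_0<X> is the subset [kpoly]. *)
Definition kser := word -> k.

Definition kzero : kser := fun _ => 0.
Definition kadd (f g : kser) : kser := fun w => f w + g w.
Definition kscale (c : k) (f : kser) : kser := fun w => c * f w.
Definition kmul (f g : kser) : kser :=
  fun w => \sum_(i < (size w).+1) f (take i w) * g (drop i w).
(* unit of k<X> (only used to write products of lists; not in k_0<X>) *)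
Definition kone : kser := fun w => (w == [::])%:R.
Definition kvar (i : nat) : kser := fun w => (w == [:: i])%:R.

Definition kpoly (f : kser) : Prop :=
  f [::] = 0 /\ exists s : seq word, forall w, f w != 0 -> w \in s.

(* algebra endomorphisms of k_0<X> (maps on kpoly; values outside kpoly irrelevant) *)
Definition alg_endo (phi : kser -> kser) : Prop :=
  (forall f, kpoly f -> kpoly (phi f)) /\
  (forall f g, kpoly f -> kpoly g -> phi (kadd f g) = kadd (phi f) (phi g)) /\
  (forall c f, kpoly f -> phi (kscale c f) = kscale c (phi f)) /\
  (forall f g, kpoly f -> kpoly g -> phi (kmul f g) = kmul (phi f) (phi g)).

Definition is_subspace (V : kser -> Prop) : Prop :=
  (forall f, V f -> kpoly f) /\ V kzero /\
  (forall f g, V f -> V g -> V (kadd f g)) /\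
  (forall c f, V f -> V (kscale c f)).

Definition is_Tspace (V : kser -> Prop) : Prop :=
  is_subspace V /\ forall phi f, alg_endo phi -> V f -> V (phi f).

Definition Tspace_gen (S : kser -> Prop) : kser -> Prop :=
  fun f => forall V, is_Tspace V -> (forall g, S g -> V g) -> V f.

Definition is_ideal (V : kser -> Prop) : Prop :=
  is_subspace V /\
  forall f g, V f -> kpoly g -> V (kmul f g) /\ V (kmul g f).

Definition kprod (l : seq kser) : kser := foldr kmul kone l.

Definition Sd (d : nat) (v : 'I_d -> kser) : kser :=
  \big[kadd/kzero]_(s : 'S_d) kprod [seq v (s i) | i <- enum 'I_d].

Definition Sd_x (d : nat) : kser := Sd (fun i : 'I_d => kvar i).

Definition R1 (d : nat) : kser -> Prop := Tspace_gen (fun f => f = Sd_x d).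

Definition R2 (d : nat) : kser -> Prop :=
  Tspace_gen (fun f => R1 d f \/
    exists (u : kser) (v : 'I_d -> kser),
      R1 d u /\ (forall i, kpoly (v i)) /\ f = kmul u (Sd v)).

End FreeAlg.

(* The T-space generated by S_d(x) is spanned by the values S_d(v_1, ..., v_d),
   v_i in k_0<X>: the substitution x_i |-> v_i is an endomorphism sending S_d(x)
   to S_d(v), and this span is already a T-space.  It is closed under
   multiplication: merging u into the letter just before it (when there is one)
   writes S_(d+1)(u, v) - u S_d(v) as a sum of values of S_d, and merging each
   of the d+1 letters of (u, v) in the same way writes d S_(d+1)(u, v) as such a
   sum.  Eliminating S_(d+1)(u, v) expresses d (u S_d(v)) as a combination of
   values of S_d, and symmetrically for S_d(v) u.  As d is invertible in k, the
   span is an ideal, so R_2 adds nothing to R_1. *)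

From HB Require Import structures.
From mathcomp Require Import all_boot all_order all_algebra all_fingroup.
From mathcomp Require Import boolp.
Set Implicit Arguments. Unset Strict Implicit. Unset Printing Implicit Defensive.
Import GRing.Theory.
Local Open Scope ring_scope.

Lemma big_nat_shift (R : nmodType) n j (G : nat -> R) : (j <= n)%N ->
  \sum_(0 <= l < (n - j).+1) G l =
  \sum_(0 <= i < n.+1) (if (j <= i)%N then G (i - j)%N else 0).
Proof.
move=> le_jn; rewrite [RHS](@big_cat_nat _ _ _ j) //=; last exact: ltnW.
rewrite [X in _ = X + _]big_nat_cond [X in _ = X + _]big1 ?add0r; last first.
  by move=> i /andP[/andP[_ lt_ij] _]; rewrite leqNgt lt_ij.
rewrite -{2}(add0n j) big_addn subSn //.
by apply: eq_big_nat => i _; rewrite leq_addl addnK.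
Qed.

Section SeriesAlgebra.
Variable k : fieldType.
Local Notation S := (kser k).

Lemma kmulE (f g : S) w : kmul f g w =
  \sum_(0 <= i < (size w).+1) f (take i w) * g (drop i w).
Proof. by rewrite /kmul big_mkord. Qed.

Lemma kmulA : associative (@kmul k).
Proof.
move=> f g h; apply/funext => w; rewrite !kmulE.
set n := size w.
transitivity (\sum_(0 <= j < n.+1) \sum_(0 <= i < n.+1)
   (if (j <= i)%N then f (take j w) * g (drop j (take i w)) * h (drop i w) else 0)).
  apply: eq_big_nat => j /andP[_ lt_jn].
  rewrite kmulE mulr_sumr size_drop -/n big_nat_shift //.
  apply: eq_big_nat => i /andP[_ lt_in]; case: ifP => // le_ji.
  by rewrite take_drop drop_drop !subnK // mulrA.
rewrite exchange_big_nat /=; apply: eq_big_nat => i /andP[_ lt_in].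
rewrite kmulE mulr_suml size_takel //.
rewrite (big_nat_widen _ _ _ _ _ (_ : i.+1 <= n.+1)%N) //.
rewrite [RHS]big_mkcond; apply: eq_big_nat => j /andP[_ lt_ji]; rewrite ltnS.
by case: ifP => // le_ji; rewrite take_takel.
Qed.

Lemma kmul1 : left_id (@kone k) (@kmul k).
Proof.
move=> f; apply/funext => w; rewrite kmulE big_nat_recl //.
rewrite /kone take0 eqxx mul1r drop0 big_nat big1 ?addr0 // => i /andP[_ lt_iw].
have: size (take i.+1 w) = i.+1 by rewrite size_takel.
by case: (take i.+1 w) => //= ? ? _; rewrite mul0r.
Qed.

Lemma kmul1r : right_id (@kone k) (@kmul k).
Proof.
move=> f; apply/funext => w; rewrite kmulE big_nat_recr //=.
rewrite /kone drop_size eqxx mulr1 take_size big_nat big1 ?add0r // => i /andP[_ lt_iw].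
have: size (drop i w) = (size w - i)%N by rewrite size_drop.
case: (drop i w) => /= [|? ? _]; last by rewrite mulr0.
by move/esym/eqP; rewrite subn_eq0 leqNgt lt_iw.
Qed.

Lemma kmulDl : left_distributive (@kmul k) (@kadd k).
Proof.
move=> f g h; apply/funext => w; rewrite /kadd !kmulE -big_split /=.
by apply: eq_bigr => i _; rewrite mulrDl.
Qed.

Lemma kmulDr : right_distributive (@kmul k) (@kadd k).
Proof.
move=> f g h; apply/funext => w; rewrite /kadd !kmulE -big_split /=.
by apply: eq_bigr => i _; rewrite mulrDr.
Qed.

Definition kopp (f : S) : S := fun w => - f w.

Lemma kaddA : associative (@kadd k).
Proof. by move=> f g h; apply/funext => w; rewrite /kadd addrA. Qed.
Lemma kaddC : commutative (@kadd k).
Proof. by move=> f g; apply/funext => w; rewrite /kadd addrC. Qed.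
Lemma kadd0 : left_id (@kzero k) (@kadd k).
Proof. by move=> f; apply/funext => w; rewrite /kadd add0r. Qed.
Lemma kaddN : left_inverse (@kzero k) kopp (@kadd k).
Proof. by move=> f; apply/funext => w; rewrite /kadd addNr. Qed.

HB.instance Definition _ := gen_eqMixin S.
HB.instance Definition _ := gen_choiceMixin S.
HB.instance Definition _ := GRing.isZmodule.Build S kaddA kaddC kadd0 kaddN.
HB.instance Definition _ :=
  GRing.Zmodule_isPzRing.Build S kmulA kmul1 kmul1r kmulDl kmulDr.

Lemma kone_neq0 : (@kone k) != 0.
Proof.
by apply/eqP => /(congr1 (fun f : S => f [::])); rewrite /kone eqxx; apply/eqP/oner_neq0.
Qed.
HB.instance Definition _ := GRing.PzSemiRing_isNonZero.Build S kone_neq0.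

Lemma kscaleA a b (f : S) : kscale a (kscale b f) = kscale (a * b) f.
Proof. by apply/funext => w; rewrite /kscale mulrA. Qed.
Lemma kscale1 : left_id 1 (@kscale k).
Proof. by move=> f; apply/funext => w; rewrite /kscale mul1r. Qed.
Lemma kscaleDr : right_distributive (@kscale k) +%R.
Proof. by move=> a f g; apply/funext => w; rewrite /kscale mulrDr. Qed.
Lemma kscaleDl (f : S) : {morph (@kscale k)^~ f : a b / a + b}.
Proof. by move=> a b; apply/funext => w; rewrite /kscale mulrDl. Qed.

HB.instance Definition _ :=
  GRing.Zmodule_isLmodule.Build k S kscaleA kscale1 kscaleDr kscaleDl.

Lemma kmul_mulr (f g : S) : kmul f g = f * g. Proof. by []. Qed.
Lemma koneE : @kone k = 1. Proof. by []. Qed.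
Lemma kscaleE c (f : S) : kscale c f = c *: f. Proof. by []. Qed.

Lemma kscaleAl a (f g : S) : a *: (f * g) = (a *: f) * g.
Proof.
apply/funext => w; rewrite -!kscaleE -!kmul_mulr /kscale !kmulE mulr_sumr.
by apply: eq_bigr => i _; rewrite mulrA.
Qed.
Lemma kscaleAr a (f g : S) : a *: (f * g) = f * (a *: g).
Proof.
apply/funext => w; rewrite -!kscaleE -!kmul_mulr /kscale !kmulE mulr_sumr.
by apply: eq_bigr => i _; rewrite mulrCA.
Qed.

HB.instance Definition _ := GRing.Lmodule_isLalgebra.Build k S kscaleAl.
HB.instance Definition _ := GRing.Lalgebra_isAlgebra.Build k S kscaleAr.

Lemma kcoef0 w : (0 : S) w = 0. Proof. by []. Qed.
Lemma kcoefD (f g : S) w : (f + g) w = f w + g w. Proof. by []. Qed.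
Lemma kcoefZ c (f : S) w : (c *: f) w = c * f w. Proof. by []. Qed.
Lemma kcoef_sum I (r : seq I) (P : pred I) (F : I -> S) w :
  (\sum_(i <- r | P i) F i) w = \sum_(i <- r | P i) F i w.
Proof. by elim/big_rec2: _ => // i y1 y2 _ <-. Qed.
Lemma kcoefM_nil (f g : S) : (f * g) [::] = f [::] * g [::].
Proof. by rewrite -kmul_mulr kmulE big_nat1. Qed.

End SeriesAlgebra.

Section SymmetricSum.
Variable R : pzRingType.

Definition Ssym n (f : 'I_n -> R) : R := \sum_(s : 'S_n) \prod_(i < n) f (s i).

Lemma eq_Ssym n (f g : 'I_n -> R) : f =1 g -> Ssym f = Ssym g.
Proof. by move=> efg; apply: eq_bigr => s _; apply: eq_bigr => i _; rewrite efg. Qed.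

Lemma Ssym0 (f g : 'I_0 -> R) : Ssym f = Ssym g.
Proof. by apply: eq_bigr => s _; rewrite !big_ord0. Qed.

Lemma Ssym_perm n (f : 'I_n -> R) (t : 'S_n) : Ssym (fun i => f (t i)) = Ssym f.
Proof.
rewrite /Ssym [RHS](reindex_inj (mulIg t)) /=.
by apply: eq_bigr => s _; apply: eq_bigr => i _; rewrite permM.
Qed.

Lemma Ssym_permr n (f : 'I_n -> R) (t : 'S_n) :
  \sum_(s : 'S_n) \prod_(i < n) f (s (t i)) = Ssym f.
Proof.
rewrite /Ssym [RHS](reindex_inj (mulgI t)) /=.
by apply: eq_bigr => s _; apply: eq_bigr => i _; rewrite permM.
Qed.

Lemma big_perm_ord0 n (F : 'S_n.+1 -> R) (j : 'I_n.+1) :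
  \sum_(s : 'S_n.+1 | s ord0 == j) F s = \sum_(t : 'S_n) F (lift_perm ord0 j t).
Proof.
rewrite (reindex (lift_perm ord0 j)); last first.
  pose ulsf i (s : 'S_n.+1) k := odflt k (unlift (s i) (s (lift i k))).
  have ulsfK i (s : 'S_n.+1) k: lift (s i) (ulsf i s k) = s (lift i k).
    rewrite /ulsf; have:= neq_lift i k.
    by rewrite -(can_eq (permK s)) => /unlift_some[] ? ? ->.
  have inj_ulsf: injective (ulsf ord0 _).
    move=> s; apply: can_inj (ulsf (s ord0) s^-1%g) _ => k'.
    by rewrite {1}/ulsf ulsfK !permK liftK.
  exists (fun s => perm (inj_ulsf s)) => [s _ | s].
    by apply/permP=> k'; rewrite permE /ulsf lift_perm_lift lift_perm_id liftK.
  move/(s _ =P _) => si0; apply/permP=> k.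
  case: (unliftP ord0 k) => [k'|] ->; rewrite ?lift_perm_id //.
  by rewrite lift_perm_lift -si0 permE ulsfK.
by apply: eq_bigl => t; rewrite lift_perm_id eqxx.
Qed.

Lemma Ssym_recl n (f : 'I_n.+1 -> R) :
  Ssym f = \sum_(j < n.+1) f j * Ssym (fun i => f (lift j i)).
Proof.
rewrite /Ssym (partition_big (fun s : 'S_n.+1 => s ord0) xpredT) //=.
apply: eq_bigr => j _; rewrite big_perm_ord0 mulr_sumr.
apply: eq_bigr => t _; rewrite big_ord_recl lift_perm_id.
by congr (_ * _); apply: eq_bigr => i _; rewrite lift_perm_lift.
Qed.

Definition cons_ord n (u : R) (v : 'I_n -> R) : 'I_n.+1 -> R :=
  fun i => if unlift ord0 i is Some j then v j else u.
Definition set_ord n (v : 'I_n -> R) (a : 'I_n) (x : R) : 'I_n -> R :=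
  fun i => if i == a then x else v i.

Lemma cons_ord0 n u (v : 'I_n -> R) : cons_ord u v ord0 = u.
Proof. by rewrite /cons_ord unlift_none. Qed.
Lemma cons_ord_lift n u (v : 'I_n -> R) j : cons_ord u v (lift ord0 j) = v j.
Proof. by rewrite /cons_ord liftK. Qed.

Lemma lift_lift0 n (i : 'I_n.+1) (x : 'I_n) :
  lift (lift ord0 i) (lift ord0 x) = lift ord0 (lift i x).
Proof. by apply: val_inj; rewrite /= /bump /= leq_add2l addnCA. Qed.

(* Each monomial of [S_(n+1)(u, v)] either starts with [u] or has [u] right
   after some [v a]; merging that [u] into [v a] gives the left-hand side. *)
Lemma Ssym_merge n (v : 'I_n -> R) (u : R) :
  \sum_(a < n) Ssym (set_ord v a (v a * u)) = Ssym (cons_ord u v) - u * Ssym v.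
Proof.
elim: n v u => [|m IH] v u.
  by rewrite big_ord0 Ssym_recl big_ord1 cons_ord0 (Ssym0 _ v) subrr.
rewrite [in RHS]Ssym_recl [in RHS]big_ord_recl cons_ord0.
rewrite (@eq_Ssym _ _ v); last by move=> i; rewrite cons_ord_lift.
rewrite [RHS]addrAC subrr add0r.
transitivity (\sum_(a < m.+1) \sum_(i < m.+1)
   set_ord v a (v a * u) i * Ssym (fun j => set_ord v a (v a * u) (lift i j))).
  by apply: eq_bigr => a _; rewrite Ssym_recl.
rewrite exchange_big /=; apply: eq_bigr => i _.
rewrite (bigD1_ord i) //= cons_ord_lift.
rewrite (@eq_Ssym _ (fun j => cons_ord u v (lift (lift ord0 i) j))
                    (cons_ord u (fun j => v (lift i j)))); last first.
  move=> j; case: (unliftP ord0 j) => [j'|] ->.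
    by rewrite lift_lift0 !cons_ord_lift.
  by rewrite (_ : lift (lift ord0 i) ord0 = ord0) ?cons_ord0 //; apply: val_inj.
rewrite -[Ssym (cons_ord _ _)](subrK (u * Ssym (fun j => v (lift i j)))) -IH.
rewrite mulrDr [RHS]addrC mulrA; congr (_ + _).
  rewrite {1}/set_ord eqxx; congr (_ * _); apply: eq_Ssym => j.
  by rewrite /set_ord eq_sym (negbTE (neq_lift i j)).
rewrite [RHS]mulr_sumr.
apply: eq_bigr => a _; rewrite {1}/set_ord (negbTE (neq_lift i a)); congr (_ * _).
apply: eq_Ssym => j; rewrite /set_ord (inj_eq (@lift_inj _ i)).
by case: eqP => // ->.
Qed.

Lemma Ssym_merge_all n (f : 'I_n.+1 -> R) :
  \sum_(p < n.+1) \sum_(a < n)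
     Ssym (set_ord (fun j => f (lift p j)) a (f (lift p a) * f p)) = Ssym f *+ n.
Proof.
transitivity (\sum_(p < n.+1) (Ssym f - f p * Ssym (fun j => f (lift p j)))).
  apply: eq_bigr => p _; rewrite Ssym_merge; congr (_ - _).
  rewrite -(Ssym_perm f (lift_perm ord0 p 1)); apply: eq_Ssym => i.
  case: (unliftP ord0 i) => [i'|] ->.
    by rewrite cons_ord_lift lift_perm_lift perm1.
  by rewrite cons_ord0 lift_perm_id.
by rewrite sumrB -Ssym_recl sumr_const card_ord mulrSr addrK.
Qed.

Lemma Ssym_mull_expand n (v : 'I_n -> R) (u : R) :
  u * Ssym v *+ n =
  \sum_(p < n.+1) \sum_(a < n) Ssym (set_ord (fun j => cons_ord u v (lift p j)) a
                                      (cons_ord u v (lift p a) * cons_ord u v p))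
  - (\sum_(a < n) Ssym (set_ord v a (v a * u))) *+ n.
Proof.
rewrite Ssym_merge_all -[Ssym (cons_ord u v)](subrK (u * Ssym v)) -Ssym_merge.
by rewrite mulrnDl addrAC subrr add0r.
Qed.

End SymmetricSum.

Lemma prod_ord_converse (R : pzRingType) n (F : 'I_n -> R) :
  \prod_(i < n) (F i : R^c) = \prod_(i < n) F (rev_ord i).
Proof.
elim: n F => [|n IH] F; first by rewrite !big_ord0.
rewrite big_ord_recl [RHS]big_ord_recr /=.
have -> : \prod_(i < n) (F (lift ord0 i) : R^c) =
          \prod_(i < n) F (lift ord0 (rev_ord i)) :> R by exact: IH.
have -> : rev_ord ord_max = ord0 :> 'I_n.+1 by apply: val_inj; rewrite /= subnn.
congr (_ * _); apply: eq_bigr => i _; congr F; apply: val_inj => /=.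
by rewrite /bump /= add1n subSS subnS prednK // subn_gt0.
Qed.

Lemma Ssym_converse (R : pzRingType) n (f : 'I_n -> R) : @Ssym R^c n f = Ssym f.
Proof.
rewrite -[Ssym f](Ssym_permr f (perm (@rev_ord_inj n))).
by apply: eq_bigr => s _; rewrite prod_ord_converse; apply: eq_bigr => i _; rewrite permE.
Qed.

Lemma Ssym_mulr_expand (R : pzRingType) n (v : 'I_n -> R) (u : R) :
  Ssym v * u *+ n =
  \sum_(p < n.+1) \sum_(a < n) Ssym (set_ord (fun j => cons_ord u v (lift p j)) a
                                      (cons_ord u v p * cons_ord u v (lift p a)))
  - (\sum_(a < n) Ssym (set_ord v a (u * v a))) *+ n.
Proof.
have := @Ssym_mull_expand R^c n v u; rewrite Ssym_converse => ->.
under [in RHS]eq_bigr do under eq_bigr do rewrite -Ssym_converse.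
by under [X in _ = _ - X *+ _]eq_bigr do rewrite -Ssym_converse.
Qed.

Section Substitution.
Variable k : fieldType.
Local Notation S := (kser k).

Definition eq_upto n (f g : S) := forall w, (size w <= n)%N -> f w = g w.

Lemma eq_upto_sym n (f g : S) : eq_upto n f g -> eq_upto n g f.
Proof. by move=> efg w le_wn; rewrite efg. Qed.
Lemma eq_upto_all (f g : S) : (forall n, eq_upto n f g) -> f = g.
Proof. by move=> efg; apply/funext => w; exact: (efg (size w)). Qed.

Lemma eq_uptoD n (f f' g g' : S) :
  eq_upto n f f' -> eq_upto n g g' -> eq_upto n (f + g) (f' + g').
Proof. by move=> ef eg w le_wn; rewrite !kcoefD ef ?eg. Qed.

Lemma eq_upto_sum n I (r : seq I) (F G : I -> S) :
  (forall i, eq_upto n (F i) (G i)) -> eq_upto n (\sum_(i <- r) F i) (\sum_(i <- r) G i).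
Proof. by move=> eFG w le_wn; rewrite !kcoef_sum; apply: eq_bigr => i _; rewrite eFG. Qed.

Lemma eq_upto_mull n (a f g : S) :
  a [::] = 0 -> eq_upto n f g -> eq_upto n.+1 (a * f) (a * g).
Proof.
move=> a_nil efg w le_wn; rewrite -!kmul_mulr !kmulE big_nat_recl // [RHS]big_nat_recl //.
rewrite take0 a_nil !mul0r; congr (_ + _); apply: eq_big_nat => i /andP[_ lt_iw].
by rewrite efg // size_drop leq_subLR (leq_trans le_wn) // addSn ltnS leq_addl.
Qed.

Definition lquot (x : nat) (f : S) : S := fun w => f (x :: w).

Lemma lquotD x (f g : S) : lquot x (f + g) = lquot x f + lquot x g.
Proof. by []. Qed.
Lemma lquotZ x c (f : S) : lquot x (c *: f) = c *: lquot x f.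
Proof. by []. Qed.
Lemma lquotM x (f g : S) : lquot x (f * g) = lquot x f * g + f [::] *: lquot x g.
Proof.
apply/funext => w; rewrite /lquot kcoefD kcoefZ -!kmul_mulr !kmulE /= big_nat_recl //=.
by rewrite addrC.
Qed.
Lemma lquot1 x : lquot x 1 = 0.
Proof. by apply/funext => w; rewrite /lquot -koneE /kone. Qed.

Lemma scalar_nil c : (c%:A : S) [::] = c.
Proof. by rewrite kcoefZ -koneE /kone eqxx mulr1. Qed.

Variables (d : nat) (v : 'I_d -> S).
Hypothesis v_nil : forall i, v i [::] = 0.

(* The substitution [x_i |-> v i] for [i < d] and [x_i |-> 0] for [i >= d]:
   since the [v i] have no constant term, the coefficients of [ksubst f] on
   words of length at most [n] are already those of [ksubst_upto n f]. *)
Fixpoint ksubst_upto n (f : S) : S :=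
  if n is n'.+1 then (f [::])%:A + \sum_(i < d) v i * ksubst_upto n' (lquot i f)
  else (f [::])%:A.

Definition ksubst (f : S) : S := fun w => ksubst_upto (size w) f w.

Lemma vM_nil i (g : S) : (v i * g) [::] = 0.
Proof. by rewrite kcoefM_nil v_nil mul0r. Qed.

Lemma ksubst_upto_nil n f : ksubst_upto n f [::] = f [::].
Proof.
case: n => [|n] /=; first exact: scalar_nil.
by rewrite kcoefD scalar_nil kcoef_sum big1 ?addr0 // => i _; exact: vM_nil.
Qed.

Lemma eq_upto_ksubst_upto n m f :
  (n <= m)%N -> eq_upto n (ksubst_upto n f) (ksubst_upto m f).
Proof.
elim: n m f => [|n IH] m f le_nm.
  by move=> w; rewrite leqn0 size_eq0 => /eqP ->; rewrite !ksubst_upto_nil.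
case: m le_nm => // m le_nm /=; apply: eq_uptoD => //; apply: eq_upto_sum => i.
exact: eq_upto_mull (v_nil i) (IH _ _ le_nm).
Qed.

Lemma eq_upto_ksubst n f : eq_upto n (ksubst f) (ksubst_upto n f).
Proof. by move=> w le_wn; apply: eq_upto_ksubst_upto. Qed.

Lemma ksubst_nil f : ksubst f [::] = f [::].
Proof. exact: ksubst_upto_nil. Qed.

Lemma ksubst_rec f : ksubst f = (f [::])%:A + \sum_(i < d) v i * ksubst (lquot i f).
Proof.
apply: eq_upto_all => n w le_wn; rewrite (eq_upto_ksubst f le_wn); move: w le_wn.
case: n => [|n] /=.
  move=> w; rewrite leqn0 size_eq0 => /eqP -> /=.
  by rewrite !kcoefD scalar_nil !kcoef_sum big1 ?addr0 // => i _; exact: vM_nil.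
apply: eq_uptoD => //; apply: eq_upto_sum => i.
exact/eq_upto_mull/eq_upto_sym/eq_upto_ksubst.
Qed.

Lemma ksubst_uptoD n f g : ksubst_upto n (f + g) = ksubst_upto n f + ksubst_upto n g.
Proof.
elim: n f g => [|n IH] f g /=; first by rewrite kcoefD scalerDl.
rewrite kcoefD scalerDl.
under eq_bigr do rewrite lquotD IH mulrDr.
by rewrite big_split /= addrACA.
Qed.

Lemma ksubst_uptoZ n c f : ksubst_upto n (c *: f) = c *: ksubst_upto n f.
Proof.
elim: n f => [|n IH] f /=; first by rewrite kcoefZ scalerA.
rewrite kcoefZ -scalerA scalerDr scaler_sumr; congr (_ + _).
by apply: eq_bigr => i _; rewrite lquotZ IH scalerAr.
Qed.

Lemma ksubstD f g : ksubst (f + g) = ksubst f + ksubst g.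
Proof. by apply/funext => w; rewrite /ksubst ksubst_uptoD. Qed.
Lemma ksubstZ c f : ksubst (c *: f) = c *: ksubst f.
Proof. by apply/funext => w; rewrite /ksubst ksubst_uptoZ. Qed.
Lemma ksubst0 : ksubst 0 = 0.
Proof. by apply: (addrI (ksubst 0)); rewrite -ksubstD !addr0. Qed.
Lemma ksubst_sum I (r : seq I) (F : I -> S) :
  ksubst (\sum_(i <- r) F i) = \sum_(i <- r) ksubst (F i).
Proof. exact: (big_morph _ ksubstD ksubst0). Qed.

Lemma eq_upto_ksubstM n f g : eq_upto n (ksubst (f * g)) (ksubst f * ksubst g).
Proof.
elim: n f g => [|n IH] f g.
  by move=> w; rewrite leqn0 size_eq0 => /eqP ->; rewrite kcoefM_nil !ksubst_nil kcoefM_nil.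
rewrite [ksubst (f * g)]ksubst_rec [ksubst f]ksubst_rec mulrDl mulr_algl kcoefM_nil.
rewrite [X in f [::] *: X]ksubst_rec scalerDr scalerA -addrA; apply: eq_uptoD => //.
rewrite scaler_sumr mulr_suml -big_split /=; apply: eq_upto_sum => i.
rewrite lquotM ksubstD ksubstZ mulrDr addrC -scalerAr -mulrA.
by apply: eq_uptoD => //; exact: eq_upto_mull (v_nil i) (IH _ _).
Qed.

Lemma ksubstM f g : ksubst (f * g) = ksubst f * ksubst g.
Proof. apply: eq_upto_all => n; exact: eq_upto_ksubstM. Qed.

Lemma ksubst1 : ksubst 1 = 1.
Proof.
rewrite ksubst_rec big1 ?addr0; last by move=> i _; rewrite lquot1 ksubst0 mulr0.
by rewrite -koneE /kone eqxx scale1r.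
Qed.

Lemma ksubst_var (i : 'I_d) : ksubst (kvar k i) = v i.
Proof.
rewrite ksubst_rec /kvar /= scale0r add0r (bigD1 i) //= big1 ?addr0.
  have -> : lquot i (fun w => (w == [:: nat_of_ord i])%:R) = 1.
    by apply/funext => w; rewrite /lquot -koneE /kone eqseq_cons eqxx.
  by rewrite ksubst1 mulr1.
move=> j neq_ji; have -> : lquot j (fun w => (w == [:: nat_of_ord i])%:R) = 0.
  by apply/funext => w; rewrite /lquot eqseq_cons (inj_eq val_inj) (negbTE neq_ji).
by rewrite ksubst0 mulr0.
Qed.

End Substitution.

Section Polynomials.
Variable k : fieldType.
Local Notation S := (kser k).

Definition finsupp (f : S) := exists s : seq word, forall w, f w != 0 -> w \in s.

Lemma finsupp0 : finsupp 0.
Proof. by exists [::] => w; rewrite kcoef0 eqxx. Qed.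

Lemma finsupp1 : finsupp 1.
Proof. by exists [:: [::]] => w; rewrite -koneE /kone; case: (w =P [::]) => [->|] //=; rewrite eqxx. Qed.

Lemma finsuppD f g : finsupp f -> finsupp g -> finsupp (f + g).
Proof.
move=> [s1 fs1] [s2 gs2]; exists (s1 ++ s2) => w; rewrite kcoefD mem_cat.
by case: (f w =P 0) => [->|/eqP /fs1 -> //]; rewrite add0r => /gs2 ->; rewrite orbT.
Qed.

Lemma finsuppZ c f : finsupp f -> finsupp (c *: f).
Proof.
move=> [s fs]; exists s => w; rewrite kcoefZ => /eqP cfw; apply: fs.
by apply/eqP => fw0; apply: cfw; rewrite fw0 mulr0.
Qed.

Lemma finsupp_sum I (r : seq I) (F : I -> S) :
  (forall i, finsupp (F i)) -> finsupp (\sum_(i <- r) F i).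
Proof. by move=> fsF; elim/big_rec: _ => [|i x _]; [exact: finsupp0 | exact: finsuppD]. Qed.

Lemma finsuppM f g : finsupp f -> finsupp g -> finsupp (f * g).
Proof.
move=> [s1 fs1] [s2 gs2]; exists [seq a ++ b | a <- s1, b <- s2] => w fgw.
have [i fgi] : exists i : 'I_(size w).+1, f (take i w) * g (drop i w) != 0.
  apply/existsP; move: fgw; apply: contraR => /existsPn fg0.
  by rewrite -kmul_mulr /kmul big1 // => i _; exact/eqP/negbNE/fg0.
rewrite -(cat_take_drop i w); apply: allpairs_f.
  by apply: fs1; move: fgi; apply: contra => /eqP ->; rewrite mul0r.
by apply: gs2; move: fgi; apply: contra => /eqP ->; rewrite mulr0.
Qed.

Definition monomial (u : word) : S := fun w => (w == u)%:R.

Lemma monomial_cons x u : monomial (x :: u) = kvar k x * monomial u.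
Proof.
apply/funext => w; rewrite -kmul_mulr kmulE /monomial /kvar.
case: w => [|y w] /=; first by rewrite big_nat1 /= mul0r.
rewrite big_nat_recl // take0 /= mul0r add0r big_nat_recl // take0 drop0 /=.
rewrite big_nat big1 ?addr0.
  by rewrite !eqseq_cons eqxx andbT; case: (y == x); case: (w == u); rewrite ?mulr1 ?mulr0.
move=> i /andP[_ lt_iw]; rewrite eqseq_cons.
have : size (take i.+1 w) = i.+1 by rewrite size_takel.
by case: (take i.+1 w) => //= ? ? _; rewrite andbF mul0r.
Qed.

Lemma finsupp_monomialE f :
  finsupp f -> exists s : seq word, f = \sum_(u <- s) f u *: monomial u.
Proof.
move=> [s0 fs]; exists (undup s0); apply/funext => w; rewrite kcoef_sum.
have [ws|wNs] := boolP (w \in undup s0).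
  rewrite (bigD1_seq w) ?undup_uniq //= kcoefZ /monomial eqxx mulr1 big1 ?addr0 //.
  by move=> u neq_uw; rewrite kcoefZ /monomial eq_sym (negbTE neq_uw) mulr0.
rewrite big1_seq; last first.
  move=> u /andP[_ us]; rewrite kcoefZ /monomial.
  by case: eqP us => [<-|]; rewrite ?(negbTE wNs) // mulr0.
rewrite mem_undup in wNs; apply/eqP; apply: contraR wNs; exact: fs.
Qed.

Lemma finsupp_ksubst d (v : 'I_d -> S) :
  (forall i, v i [::] = 0) -> (forall i, finsupp (v i)) ->
  forall f, finsupp f -> finsupp (ksubst v f).
Proof.
move=> v_nil fsv f /finsupp_monomialE [s ->]; rewrite ksubst_sum //.
apply: finsupp_sum => u; rewrite ksubstZ //; apply: finsuppZ.
elim: u => [|x u IH]; first by rewrite [monomial _]koneE ksubst1 //; exact: finsupp1.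
rewrite monomial_cons ksubstM //; apply: finsuppM => //.
rewrite ksubst_rec //; apply: finsuppD; first exact/finsuppZ/finsupp1.
apply: finsupp_sum => y; apply: finsuppM => //.
have -> : lquot y (kvar k x) = ((nat_of_ord y == x)%:R)%:A.
  apply/funext => w; rewrite /lquot /kvar kcoefZ -koneE /kone eqseq_cons.
  by case: (_ == x); case: (w == [::]); rewrite ?mulr1 ?mulr0.
by rewrite ksubstZ // ksubst1 //; exact/finsuppZ/finsupp1.
Qed.

Lemma kpoly0 : kpoly (0 : S).
Proof. by split => //; exact: finsupp0. Qed.
Lemma kpolyD (f g : S) : kpoly f -> kpoly g -> kpoly (f + g).
Proof. by move=> [f0 fs] [g0 gs]; split; [rewrite kcoefD f0 g0 addr0 | exact: finsuppD]. Qed.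
Lemma kpolyZ c (f : S) : kpoly f -> kpoly (c *: f).
Proof. by move=> [f0 fs]; split; [rewrite kcoefZ f0 mulr0 | exact: finsuppZ]. Qed.
Lemma kpolyM (f g : S) : kpoly f -> kpoly g -> kpoly (f * g).
Proof. by move=> [f0 fs] [g0 gs]; split; [rewrite kcoefM_nil f0 mul0r | exact: finsuppM]. Qed.
Lemma kpoly_sum I (r : seq I) (F : I -> S) :
  (forall i, kpoly (F i)) -> kpoly (\sum_(i <- r) F i).
Proof. by move=> pF; elim/big_rec: _ => [|i x _]; [exact: kpoly0 | exact: kpolyD]. Qed.
Lemma kpoly_var i : kpoly (kvar k i).
Proof. by split=> //; exists [:: [:: i]] => w; rewrite /kvar; case: (w =P [:: i]) => [->|] //=; rewrite mem_seq1 eqxx. Qed.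

Lemma kpoly_prod n (F : 'I_n.+1 -> S) :
  (forall i, kpoly (F i)) -> kpoly (\prod_(i < n.+1) F i).
Proof.
move=> pF; rewrite big_ord_recl; split.
  by rewrite kcoefM_nil; case: (pF ord0) => -> _; rewrite mul0r.
apply: finsuppM; first by case: (pF ord0).
by elim/big_rec: _ => [|i x _]; [exact: finsupp1 | apply: finsuppM; case: (pF (lift ord0 i))].
Qed.

Lemma kpoly_Ssym n (f : 'I_n.+1 -> S) : (forall i, kpoly (f i)) -> kpoly (Ssym f).
Proof. by move=> pf; apply: kpoly_sum => s; apply: kpoly_prod. Qed.

Lemma kpoly_cons_ord n (u : S) (v : 'I_n -> S) :
  kpoly u -> (forall i, kpoly (v i)) -> forall i, kpoly (cons_ord u v i).
Proof. by move=> pu pv i; rewrite /cons_ord; case: (unlift _ _). Qed.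

Lemma kpoly_set_ord n (v : 'I_n -> S) a x :
  (forall i, kpoly (v i)) -> kpoly x -> forall i, kpoly (set_ord v a x i).
Proof. by move=> pv px i; rewrite /set_ord; case: (_ == _). Qed.

Lemma kprodE (l : seq S) : kprod l = \prod_(x <- l) x.
Proof. by elim: l => [|a l IH]; rewrite ?big_nil ?big_cons //= -IH. Qed.

Lemma SdE d (v : 'I_d -> S) : Sd v = Ssym v.
Proof.
apply: eq_bigr => s _; rewrite kprodE big_map.
by rewrite (_ : enum 'I_d = index_enum 'I_d) // enumT; unlock index_enum.
Qed.

Lemma kpoly_Sd d (v : 'I_d -> S) : (0 < d)%N -> (forall i, kpoly (v i)) -> kpoly (Sd v).
Proof. by case: d v => // d v _ pv; rewrite SdE; exact: kpoly_Ssym. Qed.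

Lemma alg_endo_ksubst d (v : 'I_d -> S) : (forall i, kpoly (v i)) -> alg_endo (ksubst v).
Proof.
move=> pv; have v_nil i : v i [::] = 0 by case: (pv i).
split=> [f [f0 fs]|]; last split=> [f g _ _|]; last split=> [c f _|f g _ _].
- split; first by rewrite ksubst_nil.
  by apply: finsupp_ksubst => // i; case: (pv i).
- exact: ksubstD.
- exact: ksubstZ.
- exact: ksubstM.
Qed.

Lemma ksubst_Sd_x d (v : 'I_d -> S) : (forall i, v i [::] = 0) -> ksubst v (Sd_x k d) = Ssym v.
Proof.
move=> v_nil; rewrite /Sd_x SdE ksubst_sum //; apply: eq_bigr => s _.
rewrite (big_morph _ (ksubstM v_nil) (ksubst1 v_nil)).
by apply: eq_bigr => i _; rewrite ksubst_var.
Qed.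

End Polynomials.

Section AlgebraEndomorphism.
Variables (k : fieldType) (psi : kser k -> kser k).
Hypothesis psi_endo : alg_endo psi.

Lemma kpoly_endo f : kpoly f -> kpoly (psi f).
Proof. by case: psi_endo => pres _; exact: pres. Qed.
Lemma endoD f g : kpoly f -> kpoly g -> psi (f + g) = psi f + psi g.
Proof. by case: psi_endo => _ [morphD _]; exact: morphD. Qed.
Lemma endoZ c f : kpoly f -> psi (c *: f) = c *: psi f.
Proof. by case: psi_endo => _ [_ [morphZ _]]; exact: morphZ. Qed.
Lemma endoM f g : kpoly f -> kpoly g -> psi (f * g) = psi f * psi g.
Proof. by case: psi_endo => _ [_ [_ morphM]]; exact: morphM. Qed.

Lemma endo0 : psi 0 = 0.
Proof.
have := endoD (kpoly0 k) (kpoly0 k); rewrite addr0 => psi00.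
by apply: (addrI (psi 0)); rewrite -psi00 addr0.
Qed.

Lemma endo_sum I (r : seq I) (F : I -> kser k) : (forall i, kpoly (F i)) ->
  psi (\sum_(i <- r) F i) = \sum_(i <- r) psi (F i).
Proof.
move=> pF; elim: r => [|a r IH]; first by rewrite !big_nil endo0.
by rewrite !big_cons endoD ?IH //; exact: kpoly_sum.
Qed.

Lemma endo_prod n (F : 'I_n.+1 -> kser k) : (forall i, kpoly (F i)) ->
  psi (\prod_(i < n.+1) F i) = \prod_(i < n.+1) psi (F i).
Proof.
elim: n F => [|n IH] F pF; first by rewrite !big_ord1.
rewrite big_ord_recl endoM //; last exact: kpoly_prod.
by rewrite IH // [RHS]big_ord_recl.
Qed.

Lemma endo_Ssym n (v : 'I_n.+1 -> kser k) : (forall i, kpoly (v i)) ->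
  psi (Ssym v) = Ssym (fun i => psi (v i)).
Proof.
move=> pv; rewrite endo_sum; last by move=> s; exact: kpoly_prod.
by apply: eq_bigr => s _; rewrite endo_prod.
Qed.

End AlgebraEndomorphism.

Inductive Sspan (k : fieldType) (d : nat) : kser k -> Prop :=
| Sspan0 : Sspan d 0
| SspanD (f g : kser k) : Sspan d f -> Sspan d g -> Sspan d (f + g)
| SspanZ c (f : kser k) : Sspan d f -> Sspan d (c *: f)
| Sspan_Ssym (v : 'I_d -> kser k) : (forall i, kpoly (v i)) -> Sspan d (Ssym v).

Section SymmetricSpan.
Variables (k : fieldType) (d : nat).
Local Notation S := (kser k).

Lemma Sspan_sum I (r : seq I) (F : I -> S) :
  (forall i, Sspan d (F i)) -> Sspan d (\sum_(i <- r) F i).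
Proof. by move=> sF; elim/big_rec: _ => [|i x _]; [exact: Sspan0 | exact: SspanD]. Qed.

Lemma SspanB (f g : S) : Sspan d f -> Sspan d g -> Sspan d (f - g).
Proof. by move=> sf sg; apply: SspanD => //; rewrite -scaleN1r; exact: SspanZ. Qed.

Lemma SspanMn (f : S) n : Sspan d f -> Sspan d (f *+ n).
Proof. by move=> sf; rewrite -scaler_nat; exact: SspanZ. Qed.

Lemma Sspan_kpoly (f : S) : (0 < d)%N -> Sspan d f -> kpoly f.
Proof.
move=> d_gt0; elim=> [|? ? _ ? _|? ? _|v pv].
- exact: kpoly0.
- exact: kpolyD.
- exact: kpolyZ.
- by move: v pv; rewrite -(prednK d_gt0) => v; exact: kpoly_Ssym.
Qed.

Lemma Sspan_Tspace : (0 < d)%N -> is_Tspace (@Sspan k d).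
Proof.
move=> d_gt0; split.
  split; first by move=> f; exact: Sspan_kpoly.
  split; first exact: Sspan0.
  by split=> [f g|c f]; [exact: SspanD | exact: SspanZ].
move=> psi f endo; have pS := Sspan_kpoly d_gt0.
elim=> [|f1 f2 s1 IH1 s2 IH2|c f1 s1 IH|v pv].
- by rewrite (endo0 endo); exact: Sspan0.
- by rewrite (endoD endo (pS _ s1) (pS _ s2)); exact: SspanD.
- by rewrite (endoZ endo _ (pS _ s1)); exact: SspanZ.
move: v pv; rewrite -(prednK d_gt0) => v pv.
by rewrite (endo_Ssym endo) //; apply: Sspan_Ssym => i; exact: kpoly_endo.
Qed.

Hypothesis d_unit : (d%:R : k) != 0.

Lemma Sspan_scale_nat (f : S) : Sspan d (f *+ d) -> Sspan d f.
Proof.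
by move=> sfd; rewrite -[f]scale1r -(mulVf d_unit) -scalerA scaler_nat; exact: SspanZ.
Qed.

Lemma Sspan_ideal (f g : S) : Sspan d f -> kpoly g -> Sspan d (f * g) /\ Sspan d (g * f).
Proof.
move=> + pg; elim=> [|f1 f2 _ [s1 s1'] _ [s2 s2']|c f1 _ [s s']|v pv].
- by rewrite mul0r mulr0; split; exact: Sspan0.
- by rewrite mulrDl mulrDr; split; exact: SspanD.
- by rewrite -scalerAl -scalerAr; split; exact: SspanZ.
have pc := kpoly_cons_ord pg pv.
have Sspan_set (w : 'I_d -> S) a x :
    (forall i, kpoly (w i)) -> kpoly x -> Sspan d (Ssym (set_ord w a x)).
  by move=> pw px; apply: Sspan_Ssym; exact: kpoly_set_ord.
split; apply: Sspan_scale_nat.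
- rewrite Ssym_mulr_expand; apply: SspanB; last apply/SspanMn.
  + by do 2![apply: Sspan_sum => ?]; apply: Sspan_set => //; exact: kpolyM.
  + by apply: Sspan_sum => a; apply: Sspan_set => //; exact: kpolyM.
- rewrite Ssym_mull_expand; apply: SspanB; last apply/SspanMn.
  + by do 2![apply: Sspan_sum => ?]; apply: Sspan_set => //; exact: kpolyM.
  + by apply: Sspan_sum => a; apply: Sspan_set => //; exact: kpolyM.
Qed.

End SymmetricSpan.

Lemma R1_Sspan (k : fieldType) d (f : kser k) : (0 < d)%N -> R1 d f <-> Sspan d f.
Proof.
move=> d_gt0; split=> [|sf V [[_ [V0 [VD VZ]]] V_endo] V_gen].
  apply; first exact: Sspan_Tspace.
  by move=> _ ->; rewrite /Sd_x SdE; apply: Sspan_Ssym => i; exact: kpoly_var.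
have V_Sd_x := V_gen _ erefl.
elim: sf => [|f1 f2 _ V1 _ V2|c f1 _ V1|v pv]; [exact: V0 | exact: VD | exact: VZ |].
rewrite -ksubst_Sd_x => [|i]; last by case: (pv i).
by apply: V_endo => //; exact: alg_endo_ksubst.
Qed.

Unset Implicit Arguments.

Theorem mainTheorem2 (k : fieldType) (d : nat) :
  (0 < d)%N -> (d%:R : k) != 0 ->
  is_ideal (@R1 k d) /\ (forall f, @R1 k d f <-> @R2 k d f).
Proof.
move=> d_gt0 d_unit.
have R1E : @R1 k d = Sspan d by apply/funext => f; apply/propext; exact: R1_Sspan.
have Sspan_T := Sspan_Tspace k d_gt0.
have Sspan_is_ideal : is_ideal (@Sspan k d).
  by split; [case: Sspan_T | exact: Sspan_ideal].
rewrite R1E; split=> // f; split=> [sf V _ R2_gen | R2f].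
  by apply: R2_gen; left; rewrite R1E.
apply: R2f => // g; rewrite R1E => -[//|[u [v [su [pv ->]]]]].
by case: Sspan_is_ideal => _ /(_ u _ su (kpoly_Sd d_gt0 pv)) [].
Qed.
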